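(* Let $\varphi$ be a DBI normal formula and $i\in\mathcal{A}$. (1) Suppose $\varphi=\bigwedge_{j\in G}B_j\omega_j$ with $\varnothing\ne G\subseteq\mathcal{A}$, and either $i\notin G$, or $i\in G$ and $\omega_i=\bigwedge_{j\in H}B_j\pi_j$ has no propositional component. Then for every pointed Kripke model $(\mathcal{M},v)$: $\mathcal{M},v\nvDash B_i\bot$ iff $\mathcal{M}\odot\mathcal{U}_\varphi,(v,0)\nvDash B_i\bot$. (2) Suppose $\varphi=B_i\bigl(\xi\wedge\bigwedge_{k\in H}B_k\pi_k\bigr)\wedge\bigwedge_{j\in G}B_j\omega_j$ where $i\notin G$ and $\xi$ is purely propositional. Then for every pointed Kripke model $(\mathcal{M},v)$: $\mathcal{M},v\vDash\widehat{B}_i\xi$ iff $\mathcal{M}\odot\mathcal{U}_\varphi,(v,0)\nvDash B_i\bot$.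
   Context: Agents $\mathcal{A}=\{1,\dots,n\}$, $n>1$; language $\mathcal{L}$: $\varphi ::= p \mid \neg\varphi \mid (\varphi\wedge\varphi)\mid B_i\varphi$, with $\top,\bot$ as usual and $\widehat{B}_i\varphi:=\neg B_i\neg\varphi$. Kripke model $\mathcal{M}=\langle S,R,V\rangle$ (nonempty $S$, $R_i\subseteq S\times S$, $V:\mathit{Prop}\to 2^S$), standard truth. Action model $\mathcal{U}=\langle E,Q,\mathsf{pre}\rangle$ (nonempty $E$, $Q_i\subseteq E\times E$, $\mathsf{pre}:E\to\mathcal{L}$). Pointed update of $(\mathcal{M},w)$ with $(\mathcal{U},\alpha)$, defined iff $\mathcal{M},w\vDash\mathsf{pre}(\alpha)$: with $T=\{(x,\beta)\in S\times E\mid\mathcal{M},x\vDash\mathsf{pre}(\beta)\}$, $\mathcal{M}\odot\mathcal{U}=\langle S^{\mathcal U},R^{\mathcal U},V^{\mathcal U}\rangle$ where $S^{\mathcal U}$ is the smallest subset of $T$ containing $(w,\alpha)$ closed under: $(x,\beta)\in S^{\mathcal U}$, $(u,\gamma)\in T$, $xR_iu$, $\beta Q_i\gamma$ imply $(u,\gamma)\in S^{\mathcal U}$; $R^{\mathcal U}_i$ relates $(x,\beta),(u,\gamma)\in S^{\mathcal U}$ iff $xR_iu$ and $\beta Q_i\gamma$; $V^{\mathcal U}(p)=\{(x,\beta)\in S^{\mathcal U}\mid x\in V(p)\}$. Target agents: $\mathsf{ta}(p)=\varnothing$, $\mathsf{ta}(\neg\phi)=\mathsf{ta}(\phi)$,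 $\mathsf{ta}(\phi\wedge\psi)=\mathsf{ta}(\phi)\cup\mathsf{ta}(\psi)$, $\mathsf{ta}(B_i\phi)=\{i\}$. DBI formulas: $\varphi ::= B_i\xi \mid B_i(\xi\wedge\varphi)\mid(\varphi\wedge\varphi)\mid B_i\varphi$, $\xi$ purely propositional. DBI normal: $B_i\xi$ always; $B_i\varphi$, $B_i(\xi\wedge\varphi)$ iff $\varphi$ DBI normal and $i\notin\mathsf{ta}(\varphi)$; $\varphi\wedge\psi$ iff both DBI normal and $\mathsf{ta}(\varphi)\cap\mathsf{ta}(\psi)=\varnothing$. Action model $\mathcal{U}_\varphi=\langle E^\varphi,Q^\varphi,\mathsf{pre}^\varphi\rangle$ for DBI normal $\varphi$, recursively; always $E^\varphi=\{0,-1\}\sqcup D^\varphi$, $\varnothing\ne D^\varphi\subseteq\{1,2,\dots\}$, $\mathsf{pre}^\varphi(0)=\mathsf{pre}^\varphi(-1)=\top$; $\underline{Q}_j:=Q_j\cap((E\setminus\{0\})\times(E\setminus\{0\}))$. (1) $\varphi=B_i\xi$: $D=\{m\}$, $\mathsf{pre}(m)=\xi$, $Q_j=\{(0,-1),(m,-1),(-1,-1)\}$ ($j\ne i$), $Q_i=\{(0,m),(m,m),(-1,-1)\}$. (2) $\varphi=B_i\psi$: fresh $m\ge1$, $m\notin D^\psi$; $D^\varphi=D^\psi\sqcup\{m\}$; $\mathsf{pre}^\varphi$ extends $\mathsf{pre}^\psi$ with $\mathsf{pre}^\varphi(m)=\top$; $Q^\varphi_j=\underline{Q}^\psi_j\cup\{(0,-1)\}\cup\{(m,k)\mid(0,k)\in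 Q^\psi_j\}$ ($j\ne i$); $Q^\varphi_i=\underline{Q}^\psi_i\cup\{(0,m),(m,m)\}$. (3) $\varphi=B_i(\xi\wedge\psi)$: as (2) but $\mathsf{pre}^\varphi(m)=\xi$. (4) $\varphi=\psi\wedge\theta$: with $D^\psi\cap D^\theta=\varnothing$, $D^\varphi=D^\psi\sqcup D^\theta$, $\mathsf{pre}^\varphi=\mathsf{pre}^\psi\cup\mathsf{pre}^\theta$, $Q^\varphi_j=\underline{Q}^\psi_j\cup\underline{Q}^\theta_j\cup\{(0,k)\mid(0,k)\in Q^\psi_j\cup Q^\theta_j, k\in D^\psi\sqcup D^\theta\}\cup\{(0,-1)\mid\text{no such }k\text{ exists}\}$. *)

From Stdlib Require Import ZArith Lia.
From mathcomp Require Import all_boot.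

From Stdlib Require List.


Unset Strict Implicit.
Unset Printing Implicit Defensive.

Section Logic.
Variable n : nat.

Inductive form : Type :=
| Var of nat
| Neg of form
| And of form & form
| Bel of 'I_n & form.

Definition fbot : form := And (Var 0) (Neg (Var 0)).
Definition ftop : form := Neg fbot.
Definition hatB (i : 'I_n) (phi : form) : form := Neg (Bel i (Neg phi)).

Inductive pform : Type :=
| PVar of nat
| PNeg of pform
| PAnd of pform & pform.

Fixpoint pemb (x : pform) : form :=
  match x with
  | PVar p => Var p
  | PNeg a => Neg (pemb a)
  | PAnd a b => And (pemb a) (pemb b)
  end.

Record kmodel := KModel {
  kst : Type;
  krel : 'I_n -> kst -> kst -> Prop;
  kval : nat -> kst -> Prop }.

Fixpoint sat (M : kmodel) (w : kst M) (phi : form) : Prop :=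
  match phi with
  | Var p => kval M p w
  | Neg a => ~ sat M w a
  | And a b => sat M w a /\ sat M w b
  | Bel i a => forall u, krel M i w u -> sat M u a
  end.

Lemma sat_top (M : kmodel) (w : kst M) : sat M w ftop.
Proof. by move=> /= [h1 h2]. Qed.

Record amodel := AModel {
  aev : Type;
  aQ : 'I_n -> aev -> aev -> Prop;
  apre : aev -> form }.

Section Update.
Variables (M : kmodel) (U : amodel) (w : kst M) (alpha : aev U).

(* S^U : smallest subset of T containing (w,alpha) closed under the rule *)
Inductive reach : kst M * aev U -> Prop :=
| reach_base : sat M w (apre U alpha) -> reach (w, alpha)
| reach_step i x beta u gamma :
    reach (x, beta) -> sat M u (apre U gamma) ->
    krel M i x u -> aQ U i beta gamma -> reach (u, gamma).

Definition upd_model : kmodel :=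
  {| kst := {p : kst M * aev U | reach p};
     krel := fun i p q => krel M i (sval p).1 (sval q).1 /\ aQ U i (sval p).2 (sval q).2;
     kval := fun x p => kval M x (sval p).1 |}.

Definition upd_point (h : sat M w (apre U alpha)) : kst upd_model :=
  exist _ (w, alpha) (reach_base h).
End Update.

Inductive dbi : Type :=
| DB of 'I_n & pform
| DBC of 'I_n & pform & dbi
| DBB of 'I_n & dbi
| DAnd of dbi & dbi.

Fixpoint dbi_form (phi : dbi) : form :=
  match phi with
  | DB i xi => Bel i (pemb xi)
  | DBC i xi psi => Bel i (And (pemb xi) (dbi_form psi))
  | DBB i psi => Bel i (dbi_form psi)
  | DAnd a b => And (dbi_form a) (dbi_form b)
  end.

Fixpoint ta (phi : dbi) : {set 'I_n} :=
  match phi with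
  | DB i _ | DBC i _ _ | DBB i _ => [set i]
  | DAnd a b => ta a :|: ta b
  end.

Fixpoint dbi_normal (phi : dbi) : Prop :=
  match phi with
  | DB _ _ => True
  | DBC i _ psi | DBB i psi => dbi_normal psi /\ i \notin ta psi
  | DAnd a b => [/\ dbi_normal a, dbi_normal b & [disjoint ta a & ta b]]
  end.

Fixpoint conjuncts (phi : dbi) : seq dbi :=
  match phi with
  | DAnd a b => conjuncts a ++ conjuncts b
  | _ => [:: phi]
  end.

(* Raw data: D (events >= 1), Q, pre, on events in Z.  Fresh events are chosen
   deterministically: the construction with offset off uses events
   off+1 .. off+dsize phi. *)
Fixpoint dsize (phi : dbi) : Z :=
  match phi with
  | DB _ _ => 1
  | DBC _ _ psi | DBB _ psi => dsize psi + 1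
  | DAnd a b => dsize a + dsize b
  end.

Record raw := Raw {
  rD : Z -> Prop;
  rQ : 'I_n -> Z -> Z -> Prop;
  rpre : Z -> form }.

Definition Qu (U : raw) (j : 'I_n) (a b : Z) : Prop :=
  rQ U j a b /\ a <> 0%Z /\ b <> 0%Z.

Definition raw_box (i : 'I_n) (prem : form) (U : raw) (m : Z) : raw :=
  {| rD := fun k => rD U k \/ k = m;
     rpre := fun k => if (k =? m)%Z then prem else rpre U k;
     rQ := fun j a b =>
       if j == i then Qu U j a b \/ (a = 0 /\ b = m)%Z \/ (a = m /\ b = m)%Z
       else Qu U j a b \/ (a = 0 /\ b = -1)%Z \/ (a = m /\ rQ U j 0%Z b) |}.

Fixpoint Uraw (phi : dbi) (off : Z) : raw :=
  match phi with
  | DB i xi =>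
      let m := (off + 1)%Z in
      {| rD := fun k => k = m;
         rpre := fun k => if (k =? m)%Z then pemb xi else ftop;
         rQ := fun j a b =>
           if j == i then (a = 0 /\ b = m \/ a = m /\ b = m \/ a = -1 /\ b = -1)%Z
           else (a = 0 /\ b = -1 \/ a = m /\ b = -1 \/ a = -1 /\ b = -1)%Z |}
  | DBB i psi => raw_box i ftop (Uraw psi off) (off + dsize psi + 1)%Z
  | DBC i xi psi => raw_box i (pemb xi) (Uraw psi off) (off + dsize psi + 1)%Z
  | DAnd a b =>
      let Ua := Uraw a off in
      let Ub := Uraw b (off + dsize a)%Z in
      let inD k := rD Ua k \/ rD Ub k in
      let from0 j k := rQ Ua j 0%Z k \/ rQ Ub j 0%Z k in
      {| rD := inD;
         rpre := fun k => if (k <=? off + dsize a)%Z then rpre Ua k else rpre Ub k;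
         rQ := fun j x y =>
           Qu Ua j x y \/ Qu Ub j x y \/ (x = 0%Z /\ from0 j y /\ inD y)
           \/ (x = 0%Z /\ y = (-1)%Z /\ ~ (exists k, from0 j k /\ inD k)) |}
  end.

Definition U_phi (phi : dbi) : amodel :=
  let U := Uraw phi 0 in
  {| aev := {k : Z | k = 0%Z \/ k = (-1)%Z \/ rD U k};
     aQ := fun j a b => rQ U j (sval a) (sval b);
     apre := fun a => rpre U (sval a) |}.

Definition ev0 (phi : dbi) : aev (U_phi phi) :=
  exist _ 0%Z (or_introl erefl).

Lemma dsize_pos (phi : dbi) : (0 < dsize phi)%Z.
Proof. elim: phi => //= *; lia. Qed.

Lemma Uraw_pre0 (phi : dbi) (off : Z) :
  (0 <= off)%Z -> rpre (Uraw phi off) 0%Z = ftop.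
Proof.
elim: phi off => [i xi|i xi psi IH|i psi IH|a IHa b IHb] off hoff; cbn -[Z.eqb Z.leb].
- by case: (Z.eqb_spec 0 (off + 1)) => //; lia.
- case: (Z.eqb_spec 0 (off + dsize psi + 1)) => [|_]; last exact: IH.
  by have := dsize_pos psi; lia.
- case: (Z.eqb_spec 0 (off + dsize psi + 1)) => [|_]; last exact: IH.
  by have := dsize_pos psi; lia.
- case: (Z.leb_spec 0 (off + dsize a)) => [_|]; first exact: IHa.
  by have := dsize_pos a; lia.
Qed.

(* M,v |= pre(0), so the pointed update at (v,0) is always defined *)
Lemma pre_ev0 (phi : dbi) (M : kmodel) (v : kst M) :
  sat M v (apre (U_phi phi) (ev0 phi)).
Proof. by cbn -[Z.eqb Z.leb sat]; rewrite Uraw_pre0 //; exact: sat_top. Qed.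

Definition updM (M : kmodel) (phi : dbi) (v : kst M) : kmodel :=
  upd_model M (U_phi phi) v (ev0 phi).
Definition updP (M : kmodel) (phi : dbi) (v : kst M) : kst (updM M phi v) :=
  upd_point M (U_phi phi) v (ev0 phi) (pre_ev0 phi M v).
End Logic.
Arguments Var {n}.
Arguments Neg {n}.
Arguments And {n}.
Arguments Bel {n}.
Arguments fbot {n}.
Arguments ftop {n}.
Arguments hatB {n}.
Arguments pemb {n}.
Arguments kst {n}.
Arguments krel {n}.
Arguments kval {n}.
Arguments sat {n}.
Arguments aev {n}.
Arguments aQ {n}.
Arguments apre {n}.
Arguments upd_model {n}.
Arguments upd_point {n}.
Arguments DB {n}.
Arguments DBC {n}.
Arguments DBB {n}.
Arguments DAnd {n}.
Arguments dbi_form {n}.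
Arguments ta {n}.
Arguments dbi_normal {n}.
Arguments conjuncts {n}.
Arguments dsize {n}.
Arguments Uraw {n}.
Arguments U_phi {n}.
Arguments ev0 {n}.
Arguments updM {n}.
Arguments updP {n}.

(* From the event 0 of U_phi, agent i has exactly one Q_i-successor g.  If i is
   not a target agent of phi, g is -1, with precondition T.  Otherwise phi has a
   top-level conjunct B_i(...), unique by DBI normality, and g is the fresh event
   created for it, with precondition xi for B_i xi and B_i (xi /\ psi), and T for
   B_i psi.  The other conjuncts never move i away from -1, since i is not one of
   their target agents.  The i-successors of (v,0) in M (.) U_phi are therefore
   the pairs (u,g) with v R_i u and M,u |= pre(g).  So the updated point is
   i-consistent iff M,v |= hatB_i pre(g), which is M,v |/= B_i bot when
   pre(g) = T, and M,v |= hatB_i xi when pre(g) = xi. *)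

From Stdlib Require Import ZArith Lia.
From mathcomp Require Import all_boot.
From Stdlib Require List.

Local Arguments rD {n}.
Local Arguments rQ {n}.
Local Arguments rpre {n}.
Local Arguments dsize_pos {n}.
Local Arguments reach {n}.
Local Arguments reach_base {n M U w alpha}.
Local Arguments reach_step {n M U w alpha i x beta u gamma}.

Section ProductUpdate.
Context {n : nat}.
Variables (M : kmodel n) (U : amodel n) (w : kst M) (alpha : aev U).

Lemma reach_sat_pre {q} : reach M U w alpha q -> sat M q.1 (apre U q.2).
Proof. by case. Qed.

Lemma upd_Bel_fbot i (h : sat M w (apre U alpha)) :
  sat (upd_model M U w alpha) (upd_point M U w alpha h) (Bel i fbot) <->
  forall u beta, krel M i w u -> aQ U i alpha beta -> ~ sat M u (apre U beta).
Proof.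
split=> [H u beta wu alpha_beta pre_u | H [q reach_q] /= [wu alpha_beta]].
- have reach_u : reach M U w alpha (u, beta).
    exact: reach_step (reach_base h) pre_u wu alpha_beta.
  by case: (H (exist _ _ reach_u) (conj wu alpha_beta)).
- by case: (H _ _ wu alpha_beta (reach_sat_pre reach_q)).
Qed.

End ProductUpdate.

Lemma sat_hatB_top {n} (M : kmodel n) v i :
  sat M v (hatB i ftop) <-> ~ sat M v (Bel i fbot).
Proof.
split=> nH H; apply: nH => u vu.
- by move/(_ (H u vu)).
- by exfalso; apply: (H u vu); case.
Qed.

Section Construction.
Context {n : nat}.
Local Open Scope Z_scope.
Implicit Types (phi a b : dbi n) (off : Z) (i j : 'I_n).

Definition sole_succ0 (U : raw n) i (g : Z) : Prop :=
  forall y, rQ U i 0 y <-> y = g.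

Lemma Uraw_D_range {phi off k} :
  rD (Uraw phi off) k -> off < k <= off + dsize phi.
Proof.
elim: phi off k => [j xi|j xi psi IH|j psi IH|a IHa b IHb] off k /=.
- lia.
- case=> [/IH|]; have := dsize_pos psi; lia.
- case=> [/IH|]; have := dsize_pos psi; lia.
- case=> [/IHa|/IHb]; have := dsize_pos a; have := dsize_pos b; lia.
Qed.

Definition box_guard (c : dbi n) : option ('I_n * form n) :=
  match c with
  | DB j xi | DBC j xi _ => Some (j, pemb xi)
  | DBB j _ => Some (j, ftop)
  | DAnd _ _ => None
  end.

Lemma Uraw_box_event {c i p} off j : 0 <= off -> box_guard c = Some (i, p) ->
  [/\ rD (Uraw c off) (off + dsize c), rpre (Uraw c off) (off + dsize c) = p
     & sole_succ0 (Uraw c off) j (if j == i then off + dsize c else -1)].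
Proof.
move=> off_ge0; have := dsize_pos c.
case: c => [i' xi|i' xi psi|i' psi|//] /= size_gt0 [<- <-].
all: rewrite ?Z.add_assoc; split; rewrite ?Z.eqb_refl; try by [right | ].
all: by move=> y /=; case: eqP => _; rewrite ?/Qu; lia.
Qed.

Lemma Uraw_DAnd_succ0_l a b off j g : 0 <= off ->
  g = -1 \/ rD (Uraw a off) g ->
  sole_succ0 (Uraw a off) j g -> sole_succ0 (Uraw b (off + dsize a)) j (-1) ->
  sole_succ0 (Uraw (DAnd a b) off) j g.
Proof.
move=> off_ge0 g_ev Sa Sb y /=; rewrite /Qu.
have Da_m1 : ~ rD (Uraw a off) (-1) by move/Uraw_D_range; lia.
have Db_m1 : ~ rD (Uraw b (off + dsize a)) (-1).
  by move/Uraw_D_range; have := dsize_pos a; lia.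
rewrite /sole_succ0 in Sa Sb; setoid_rewrite Sa; setoid_rewrite Sb.
split=> [|->].
- case=> [[_ []]|[[_ []]|[[_ [[//|->] [?|?]]]|[_ [-> no_succ]]]]] //.
  case: g_ev => [//|Dg]; case: no_succ; exists g; tauto.
- case: g_ev => [->|Dg]; last by right; right; left; tauto.
  right; right; right; do 2!split=> //.
  by case=> k [[->|->] [?|?]].
Qed.

Lemma Uraw_DAnd_succ0_r a b off j g : 0 <= off ->
  g = -1 \/ rD (Uraw b (off + dsize a)) g ->
  sole_succ0 (Uraw a off) j (-1) -> sole_succ0 (Uraw b (off + dsize a)) j g ->
  sole_succ0 (Uraw (DAnd a b) off) j g.
Proof.
move=> off_ge0 g_ev Sa Sb y /=; rewrite /Qu.
have Da_m1 : ~ rD (Uraw a off) (-1) by move/Uraw_D_range; lia.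
have Db_m1 : ~ rD (Uraw b (off + dsize a)) (-1).
  by move/Uraw_D_range; have := dsize_pos a; lia.
rewrite /sole_succ0 in Sa Sb; setoid_rewrite Sa; setoid_rewrite Sb.
split=> [|->].
- case=> [[_ []]|[[_ []]|[[_ [[->|//] [?|?]]]|[_ [-> no_succ]]]]] //.
  case: g_ev => [//|Dg]; case: no_succ; exists g; tauto.
- case: g_ev => [->|Dg]; last by right; right; left; tauto.
  right; right; right; do 2!split=> //.
  by case=> k [[->|->] [?|?]].
Qed.

Lemma Uraw_pre_below phi off k : k <= off -> rpre (Uraw phi off) k = ftop.
Proof.
elim: phi off => [i xi|i xi psi IH|i psi IH|a IHa b IHb] off k_le /=.
- by case: Z.eqb_spec => //; lia.
- by case: Z.eqb_spec => [|_]; [have := dsize_pos psi; lia | exact: IH].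
- by case: Z.eqb_spec => [|_]; [have := dsize_pos psi; lia | exact: IH].
- by case: Z.leb_spec => [_|]; [exact: IHa | have := dsize_pos a; lia].
Qed.

Lemma box_guard_in_ta {phi c i p} :
  List.In c (conjuncts phi) -> box_guard c = Some (i, p) -> i \in ta phi.
Proof.
elim: phi => [j xi|j xi psi _|j psi _|a IHa b IHb] /=;
  try by case=> // <- [-> _]; rewrite in_set1.
move=> /(List.in_app_or (conjuncts a)) [/IHa|/IHb] /[apply] i_in;
  by rewrite in_setU i_in ?orbT.
Qed.

Lemma Uraw_succ0_notin_ta phi off i : 0 <= off -> dbi_normal phi ->
  i \notin ta phi -> sole_succ0 (Uraw phi off) i (-1).
Proof.
elim: phi off => [j xi|j xi psi _|j psi _|a IHa b IHb] off off_ge0.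
1-3: move=> _; rewrite [ta _]/= in_set1 => /negbTE i_neq.
1-3: set c := (X in Uraw X off).
1-3: by have [_ _] := Uraw_box_event (c := c) off i off_ge0 erefl; rewrite i_neq.
case=> a_normal b_normal _; rewrite [ta _]/= in_setU negb_or => /andP[i_a i_b].
apply: Uraw_DAnd_succ0_l; [done | by left | exact: IHa |].
by apply: IHb => //; have := dsize_pos a; lia.
Qed.

Lemma Uraw_succ0_guard {phi off c i p} : 0 <= off -> dbi_normal phi ->
  List.In c (conjuncts phi) -> box_guard c = Some (i, p) ->
  exists2 m, rD (Uraw phi off) m &
    sole_succ0 (Uraw phi off) i m /\ rpre (Uraw phi off) m = p.
Proof.
elim: phi off => [j xi|j xi psi _|j psi _|a IHa b IHb] off off_ge0.
1-3: move=> _ [<-|//] guard_c.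
1-3: have [Dm pre_m] := Uraw_box_event off i off_ge0 guard_c; rewrite eqxx => Sm.
1-3: by eexists; first exact: Dm.
have off_b : 0 <= off + dsize a by have := dsize_pos a; lia.
case=> a_normal b_normal disj /(List.in_app_or (conjuncts a)) [c_a|c_b] guard_c.
- have [m Dm [Sm pre_m]] := IHa off off_ge0 a_normal c_a guard_c.
  have i_b : i \notin ta b.
    by rewrite (disjointFr disj (box_guard_in_ta c_a guard_c)).
  exists m; first by left.
  split; last by rewrite /=; case: Z.leb_spec => //; have := Uraw_D_range Dm; lia.
  apply: Uraw_DAnd_succ0_l => //; first by right.
  exact: Uraw_succ0_notin_ta.
- have [m Dm [Sm pre_m]] := IHb _ off_b b_normal c_b guard_c.
  have i_a : i \notin ta a.
    by rewrite (disjointFl disj (box_guard_in_ta c_b guard_c)).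
  exists m; first by right.
  split; last by rewrite /=; case: Z.leb_spec => //; have := Uraw_D_range Dm; lia.
  apply: Uraw_DAnd_succ0_r => //; first by right.
  exact: Uraw_succ0_notin_ta.
Qed.

End Construction.

Lemma updP_not_Bel_fbot {n} {M : kmodel n} {phi v i g} :
  (g = 0 \/ g = -1 \/ rD (Uraw phi 0) g)%Z -> sole_succ0 (Uraw phi 0) i g ->
  ~ sat (updM M phi v) (updP M phi v) (Bel i fbot) <->
  sat M v (hatB i (rpre (Uraw phi 0) g)).
Proof.
move=> g_ev Sg; rewrite upd_Bel_fbot; split=> nH H; apply: nH.
- by move=> u [beta beta_ev] vu /= /Sg ->; apply: H.
- by move=> u vu; apply: (H u (exist _ g g_ev) vu); apply/Sg.
Qed.

Theorem corollary2 (n : nat) (hn : 1 < n) (phi : dbi n) (i : 'I_n) :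
  dbi_normal phi ->
  (* (1) phi = /\_{j in G} B_j omega_j with i notin G, or with
         omega_i = /\_{j in H} B_j pi_j (no propositional component) *)
  ((i \notin ta phi \/ exists psi, List.In (DBB i psi) (conjuncts phi)) ->
   forall (M : kmodel n) (v : kst M),
     ~ sat M v (Bel i fbot) <->
     ~ sat (updM M phi v) (updP M phi v) (Bel i fbot))
  /\
  (* (2) phi = B_i (xi /\ /\_{k in H} B_k pi_k) /\ /\_{j in G} B_j omega_j, i notin G *)
  (forall xi : pform,
   (List.In (DB i xi) (conjuncts phi) \/
    exists psi, List.In (DBC i xi psi) (conjuncts phi)) ->
   forall (M : kmodel n) (v : kst M),
     sat M v (hatB i (pemb xi)) <->
     ~ sat (updM M phi v) (updP M phi v) (Bel i fbot)).
Proof.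
move=> phi_normal; split=> [i_box M v | xi i_guard M v].
- have [g g_ev [Sg pre_g]] : exists2 g, (g = 0 \/ g = -1 \/ rD (Uraw phi 0) g)%Z &
      sole_succ0 (Uraw phi 0) i g /\ rpre (Uraw phi 0) g = ftop.
    case: i_box => [i_notin | [psi in_psi]].
    + exists (-1)%Z; first by right; left.
      by split; [exact: Uraw_succ0_notin_ta | exact: Uraw_pre_below].
    + have [m Dm Sm] := Uraw_succ0_guard (Z.le_refl 0) phi_normal in_psi erefl.
      by exists m; first by right; right.
  by rewrite (updP_not_Bel_fbot g_ev Sg) pre_g sat_hatB_top.
- have [c in_c guard_c] :
      exists2 c, List.In c (conjuncts phi) & box_guard c = Some (i, pemb xi).
    by case: i_guard => [? | [psi ?]]; [exists (DB i xi) | exists (DBC i xi psi)].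
  have [m Dm [Sm pre_m]] := Uraw_succ0_guard (Z.le_refl 0) phi_normal in_c guard_c.
  by rewrite (updP_not_Bel_fbot (or_intror (or_intror Dm)) Sm) pre_m.
Qed.
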